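(* Let $k \in \mathbb{N}$. Every linear $k$-DCFG $G$ is equivalent to (i.e. generates the same language as) some $k$-DCFG $G'=\langle N, \Sigma, P, S\rangle$ all of whose rules have one of the following forms, where $A, B \in N$ and $u \in \Theta$: (1) $A \to u\cdot B$ or $A \to B \cdot u$, with $|u| \leq 1$ and $u \neq \epsilon$; (2) $A \to B \odot_j u$, with $|u| \leq 1$; (3) $A \to u$, with $|u| = 1$; (4) $S \to \epsilon$ (where $S$ is the start symbol).
   Context: Fix a finite alphabet $\Sigma$; $\Sigma^*$ is the set of words over $\Sigma$ and $\epsilon$ the empty word. $\Theta_k$ is the set of tuples $(u_0,\ldots,u_k)$ with $u_i\in\Sigma^*$, and $\Theta=\bigcup_{k\in\mathbb{N}}\Theta_k$; the rank of $(u_0,\ldots,u_k)$ is $k$, and its length $|u|$ is the sum of the lengths of its components. Rank-$0$ tuples are identified with words; in particular $\epsilon$ also denotes the rank-$0$ tuple $(\epsilon)$. Concatenation $\cdot:\Theta_i\times\Theta_j\to\Theta_{i+j}$ is $(x_0,\ldots,x_i)\cdot(y_0,\ldots,y_j)=(x_0,\ldots,x_{i-1},x_iy_0,y_1,\ldots,y_j)$, and for $1\le l\le i$ intercalation $\odot_l:\Theta_i\times\Theta_j\to\Theta_{i+j-1}$ is $(x_0,\ldots,x_i)\odot_l(y_0,\ldots,y_j)=(x_0,\ldots,x_{l-2},x_{l-1}y_0,y_1,\ldots,y_{j-1},y_jx_l,x_{l+1},\ldots,x_i)$. Let $N$ be a finite set of nonterminals disjoint from $\Sigma$ with a rank function $\mathrm{rk}:N\to\mathbb{N}$.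 The set of $k$-correct terms $\mathrm{Tm}_k(N,\Sigma)$ and their ranks are defined inductively: every tuple in $\Theta_j$ with $j\le k$ is a term of rank $j$, and every nonterminal $A$ with $\mathrm{rk}(A)\le k$ is a term of rank $\mathrm{rk}(A)$; if $\alpha,\beta$ are terms with $\mathrm{rk}\,\alpha+\mathrm{rk}\,\beta\le k$ then $(\alpha\cdot\beta)$ is a term of rank $\mathrm{rk}\,\alpha+\mathrm{rk}\,\beta$; if $1\le j\le k$, $\mathrm{rk}\,\alpha\ge j$ and $\mathrm{rk}\,\alpha+\mathrm{rk}\,\beta\le k+1$ then $(\alpha\odot_j\beta)$ is a term of rank $\mathrm{rk}\,\alpha+\mathrm{rk}\,\beta-1$. A ground term is one containing no nonterminals; its value $\nu(\alpha)\in\Theta$ is obtained by interpreting $\cdot$ and $\odot_j$ as the operations above. A context $C[x]$ is a term with one leaf occurrence of a variable $x$ of some rank; $C[\beta]$ is the result of substituting a term $\beta$ of the same rank for $x$. A $k$-displacement context-free grammar ($k$-DCFG) is $G=\langle N,\Sigma,P,S\rangle$ where $S\in N$ has rank $0$ and $P$ is a finite set of rules $A\to\alpha$ with $A\in N$, $\alpha\in\mathrm{Tm}_k(N,\Sigma)$ and $\mathrm{rk}(A)=\mathrm{rk}(\alpha)$. Standing assumption: all tuples occurring as leaves of right-hand sides of rules have length at most $1$. Derivability $\vdash_G$ is the smallest reflexive transitive relation between nonterminals and terms such that $(B\to\beta)\in P$ and $A\vdash_G C[B]$ imply $A\vdash_G C[\beta]$ for any context $C$. $L_G(A)=\{\nu(\alpha)\mid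 A\vdash_G\alpha,\ \alpha \text{ ground}\}$ and $L(G)=L_G(S)$. Two grammars are equivalent if they generate the same language. A term is linear if it contains at most one occurrence of a nonterminal; a grammar is linear if the right-hand sides of all its rules are linear. All right-hand sides in the claim are required to be $k$-correct terms of the same rank as the left-hand side. *)

From Stdlib Require List.
From mathcomp Require Import all_boot.
Set Implicit Arguments. Unset Strict Implicit. Unset Printing Implicit Defensive.

Section DCFG.
Variable Sigma : finType.

(* A tuple (u_0, ..., u_k) in Theta is represented by the pair (u_0, [u_1;...;u_k]);
   this enforces that a tuple has at least one component. *)
Definition tup := (seq Sigma * seq (seq Sigma))%type.
Definition comps (x : tup) : seq (seq Sigma) := x.1 :: x.2.
Definition trank (x : tup) : nat := size x.2.
Definition tlen (x : tup) : nat := sumn (map size (comps x)).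
Definition teps : tup := ([::], [::]).
Definition mk_tup (l : seq (seq Sigma)) : tup := (head [::] l, behead l).

(* concatenation: (x_0..x_i).(y_0..y_j) = (x_0..x_{i-1}, x_i y_0, y_1..y_j) *)
Definition tcat (x y : tup) : tup :=
  mk_tup (belast x.1 x.2 ++ (last x.1 x.2 ++ y.1) :: y.2).

(* intercalation, for 1 <= l <= rank x:
   x (.)_l y = (x_0..x_{l-1}) . y . (x_l..x_i)
             = (x_0..x_{l-2}, x_{l-1} y_0, y_1..y_{j-1}, y_j x_l, x_{l+1}..x_i) *)
Definition todot (l : nat) (x y : tup) : tup :=
  tcat (tcat (mk_tup (take l (comps x))) y) (mk_tup (drop l (comps x))).

Variable N : Type.
Variable rk : N -> nat.

Inductive term : Type :=
| TTup : tup -> term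
| TNt : N -> term
| TCat : term -> term -> term
| TOdot : nat -> term -> term -> term.

Fixpoint trk (t : term) : nat :=
  match t with
  | TTup u => trank u
  | TNt A => rk A
  | TCat a b => trk a + trk b
  | TOdot _ a b => (trk a + trk b).-1
  end.

Fixpoint correct (k : nat) (t : term) : bool :=
  match t with
  | TTup u => trank u <= k
  | TNt A => rk A <= k
  | TCat a b => [&& correct k a, correct k b & trk a + trk b <= k]
  | TOdot j a b => [&& correct k a, correct k b, 1 <= j <= k, j <= trk a
                     & trk a + trk b <= k.+1]
  end.

Fixpoint nnt (t : term) : nat :=
  match t with
  | TTup _ => 0
  | TNt _ => 1
  | TCat a b | TOdot _ a b => nnt a + nnt b
  end.

Definition ground (t : term) : bool := nnt t == 0.

Fixpoint leaves_short (t : term) : bool :=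
  match t with
  | TTup u => tlen u <= 1
  | TNt _ => true
  | TCat a b | TOdot _ a b => leaves_short a && leaves_short b
  end.

(* value of a term (meaningful on ground terms; nonterminals are sent to epsilon) *)
Fixpoint nu (t : term) : tup :=
  match t with
  | TTup u => u
  | TNt _ => teps
  | TCat a b => tcat (nu a) (nu b)
  | TOdot j a b => todot j (nu a) (nu b)
  end.

(* subst1 B beta t t' : t = C[B] and t' = C[beta] for some context C
   (one leaf occurrence of B replaced by beta) *)
Inductive subst1 (B : N) (beta : term) : term -> term -> Prop :=
| S1_here : subst1 B beta (TNt B) beta
| S1_catl a a' b : subst1 B beta a a' -> subst1 B beta (TCat a b) (TCat a' b)
| S1_catr a b b' : subst1 B beta b b' -> subst1 B beta (TCat a b) (TCat a b')
| S1_odotl j a a' b : subst1 B beta a a' -> subst1 B beta (TOdot j a b) (TOdot j a' b)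
| S1_odotr j a b b' : subst1 B beta b b' -> subst1 B beta (TOdot j a b) (TOdot j a b').

End DCFG.

Arguments TTup {Sigma N}.
Arguments TNt {Sigma N}.
Arguments TCat {Sigma N}.
Arguments TOdot {Sigma N}.
Arguments teps {Sigma}.

Record grammar (Sigma : finType) := Grammar {
  nt : finType;
  rk : nt -> nat;
  rules : seq (nt * term Sigma nt);
  start : nt
}.
Arguments nt {Sigma}.
Arguments rk {Sigma}.
Arguments rules {Sigma}.
Arguments start {Sigma}.

(* G is a k-DCFG: S has rank 0, every rule A -> alpha has alpha k-correct with
   rk A = rk alpha, and (standing assumption) all leaf tuples of right-hand
   sides have length at most 1. *)
Definition is_kdcfg (Sigma : finType) (k : nat) (G : grammar Sigma) : Prop :=
  rk G (start G) = 0 /\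
  forall A alpha, List.In (A, alpha) (rules G) ->
    [/\ correct (rk G) k alpha, rk G A = trk (rk G) alpha & leaves_short alpha].

Definition linear_grammar (Sigma : finType) (G : grammar Sigma) : Prop :=
  forall A alpha, List.In (A, alpha) (rules G) -> nnt alpha <= 1.

Inductive derives (Sigma : finType) (G : grammar Sigma) (A : nt G) :
    term Sigma (nt G) -> Prop :=
| Der_refl : @derives Sigma G A (TNt A)
| Der_step B beta t t' : List.In (B, beta) (rules G) -> @derives Sigma G A t ->
    subst1 B beta t t' -> @derives Sigma G A t'.

Definition langA (Sigma : finType) (G : grammar Sigma) (A : nt G) (w : tup Sigma) : Prop :=
  exists alpha, @derives Sigma G A alpha /\ ground alpha /\ nu alpha = w.
Definition lang (Sigma : finType) (G : grammar Sigma) (w : tup Sigma) : Prop :=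
  @langA Sigma G (start G) w.

Definition normal_rule (Sigma : finType) (G : grammar Sigma)
    (A : nt G) (alpha : term Sigma (nt G)) : Prop :=
  (exists (u : tup Sigma) (B : nt G),
      (alpha = TCat (TTup u) (TNt B) \/ alpha = TCat (TNt B) (TTup u))
      /\ tlen u <= 1 /\ u <> teps)
  \/ (exists (B : nt G) (j : nat) (u : tup Sigma),
      alpha = TOdot j (TNt B) (TTup u) /\ tlen u <= 1)
  \/ (exists u : tup Sigma, alpha = TTup u /\ tlen u = 1)
  \/ (A = start G /\ alpha = TTup teps).

Arguments is_kdcfg {Sigma} k G.
Arguments linear_grammar {Sigma} G.
Arguments derives {Sigma} G A _.
Arguments langA {Sigma} G A w.
Arguments lang {Sigma} G w.
Arguments normal_rule {Sigma} G A alpha.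

From Stdlib Require List.
From Stdlib Require Import ClassicalEpsilon.
From mathcomp Require Import all_boot zify.
Set Implicit Arguments. Unset Strict Implicit. Unset Printing Implicit Defensive.

(* Encode a tuple of rank r as a word over Sigma + {#} with r separators #:
   then [u . v] is concatenation of words and [x (.)_j u] replaces the j-th
   separator of x by u.  In a linear rule [A -> alpha] with nonterminal B, the
   value of alpha is obtained from that of B by concatenating ground tuples on
   either side, by [_ (.)_j u] and by [u (.)_j _]; read on words, each of these
   operations is a chain of steps [a . _], [_ . a], [_ (.)_j (a, e)],
   [_ (.)_j (e, a)], [_ (.)_j e] adding at most one symbol a (possibly #), and
   all intermediate ranks stay within k.  A ground right-hand side is one of
   its symbols extended by such steps.  Splitting every rule along its chain
   through fresh nonterminals yields normal steps, unit rules and ground rules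
   of length <= 1; unit rules are then removed by saturation, and ground rules
   of length 0 by substituting the empty tuple into the steps that use it,
   keeping [S -> e] when e is in the language. *)

Section Encoding.
Variable Sigma : finType.
Notation word := (seq (option Sigma)).
Notation tup := (tup Sigma).
Implicit Types (x y : tup) (w v : word) (c : seq Sigma) (cs : seq (seq Sigma)).

(* [None] plays the role of the separator #. *)
Definition enc_seps cs : word := flatten [seq None :: map Some c | c <- cs].
Definition enc_comps cs : word :=
  if cs is c :: cs' then map Some c ++ enc_seps cs' else [::].
Definition enc x : word := enc_comps (comps x).

Definition split_seps w : seq (seq Sigma) :=
  foldr (fun o cs => if o is Some a then (a :: head [::] cs) :: behead cs
                     else [::] :: cs) [:: [::]] w.
Definition dec w : tup := mk_tup (split_seps w).

Definition nseps w := count (fun o => o == None) w.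
Definition nsyms w := count (fun o => o != None) w.

Lemma split_seps_cons w : exists c cs, split_seps w = c :: cs.
Proof.
elim: w => [|[a|] w [c [cs IH]]] /=; first by exists [::], [::].
  by rewrite IH; exists (a :: c), cs.
by rewrite IH; exists [::], (c :: cs).
Qed.

Lemma enc_comps_split w : enc_comps (split_seps w) = w.
Proof.
elim: w => [|o w IH] //=; have [c [cs E]] := split_seps_cons w.
by rewrite E in IH *; case: o => [a|] /=; rewrite -IH.
Qed.

Lemma enc_mk_tup cs : enc (mk_tup cs) = enc_comps cs.
Proof. by case: cs. Qed.

Lemma decK : cancel dec enc.
Proof. by move=> w; rewrite /dec enc_mk_tup enc_comps_split. Qed.

Lemma split_seps_cat c w :
  split_seps (map Some c ++ w) = (c ++ head [::] (split_seps w)) :: behead (split_seps w).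
Proof.
elim: c => [|a c IH] /=; first by have [c [cs ->]] := split_seps_cons w.
by rewrite IH.
Qed.

Lemma split_enc_seps cs : split_seps (enc_seps cs) = [::] :: cs.
Proof. by elim: cs => [|c cs IH] //=; rewrite split_seps_cat IH /= cats0. Qed.

Lemma encK : cancel enc dec.
Proof.
by case=> c cs; rewrite /dec /enc /= split_seps_cat split_enc_seps /= cats0.
Qed.

Lemma enc_inj : injective enc.
Proof. exact: can_inj encK. Qed.

Lemma nseps_cat w v : nseps (w ++ v) = nseps w + nseps v.
Proof. exact: count_cat. Qed.
Lemma nsyms_cat w v : nsyms (w ++ v) = nsyms w + nsyms v.
Proof. exact: count_cat. Qed.
Lemma nseps_map_Some c : nseps (map Some c) = 0.
Proof. by elim: c. Qed.
Lemma nsyms_map_Some c : nsyms (map Some c) = size c.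
Proof. by elim: c => //= a c ->. Qed.

Lemma nseps_enc_seps cs : nseps (enc_seps cs) = size cs.
Proof. by elim: cs => //= c cs IH; rewrite nseps_cat nseps_map_Some IH. Qed.
Lemma nsyms_enc_seps cs : nsyms (enc_seps cs) = sumn (map size cs).
Proof. by elim: cs => //= c cs IH; rewrite nsyms_cat nsyms_map_Some IH. Qed.

Lemma nseps_enc_comps cs : nseps (enc_comps cs) = (size cs).-1.
Proof. by case: cs => //= c cs; rewrite nseps_cat nseps_map_Some nseps_enc_seps. Qed.

Lemma trankE x : trank x = nseps (enc x).
Proof. by rewrite /enc nseps_enc_comps. Qed.
Lemma tlenE x : tlen x = nsyms (enc x).
Proof. by rewrite /enc /= nsyms_cat nsyms_map_Some nsyms_enc_seps. Qed.

Lemma enc_seps_cons c cs : enc_seps (c :: cs) = None :: enc_comps (c :: cs).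
Proof. by []. Qed.

Lemma enc_comps_belast c cs d ds :
  enc_comps (belast c cs ++ (last c cs ++ d) :: ds)
  = enc_comps (c :: cs) ++ enc_comps (d :: ds).
Proof.
elim: cs c => [|c' cs IH] c; first by rewrite /= map_cat cats0 catA.
rewrite [belast _ _]/= [last _ _]/= cat_cons.
have -> : enc_comps (c :: (belast c' cs ++ (last c' cs ++ d) :: ds)) =
   map Some c ++ None :: enc_comps (belast c' cs ++ (last c' cs ++ d) :: ds).
  by case: cs {IH}.
by rewrite IH /= -!catA.
Qed.

Lemma enc_tcat x y : enc (tcat x y) = enc x ++ enc y.
Proof. by rewrite /tcat enc_mk_tup enc_comps_belast. Qed.

Lemma trank_tcat x y : trank (tcat x y) = trank x + trank y.
Proof. by rewrite !trankE enc_tcat nseps_cat. Qed.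
Lemma tlen_tcat x y : tlen (tcat x y) = tlen x + tlen y.
Proof. by rewrite !tlenE enc_tcat nsyms_cat. Qed.

Fixpoint cut_sep (j : nat) w : word * word :=
  match w with
  | [::] => ([::], [::])
  | Some a :: w' => let: (P, Q) := cut_sep j w' in (Some a :: P, Q)
  | None :: w' => if j == 1 then ([::], w')
                  else let: (P, Q) := cut_sep j.-1 w' in (None :: P, Q)
  end.
Definition subst_sep j w v := let: (P, Q) := cut_sep j w in P ++ v ++ Q.

Lemma cut_sepP j w : 1 <= j <= nseps w ->
  w = (cut_sep j w).1 ++ None :: (cut_sep j w).2 /\ nseps (cut_sep j w).1 = j.-1.
Proof.
elim: w j => [|[a|] w IH] j //=; first by case: j.
  by move/IH; case: (cut_sep j w) => P Q /= [{1}-> ->].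
rewrite add1n; case: j => [|[|j]] //= Hj.
have := IH j.+1 Hj; case: (cut_sep j.+1 w) => P Q /= [{1}-> ->]; split => //.
Qed.

Lemma cut_sep_cat j P Q : nseps P = j.-1 -> 1 <= j -> cut_sep j (P ++ None :: Q) = (P, Q).
Proof.
elim: P j => [|[a|] P IH] j /=; first by case: j => [|[|j]].
  by rewrite add0n => E J; rewrite IH.
rewrite add1n; case: j => [|[|j]] //= E _.
by rewrite IH //; case: E.
Qed.

Lemma subst_sep_cat j P Q v : nseps P = j.-1 -> 1 <= j ->
  subst_sep j (P ++ None :: Q) v = P ++ v ++ Q.
Proof. by move=> E J; rewrite /subst_sep cut_sep_cat. Qed.

Lemma nseps_subst_sep j w v : 1 <= j <= nseps w ->
  nseps (subst_sep j w v) = (nseps w).-1 + nseps v.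
Proof.
move=> H; have [E1 E2] := cut_sepP H; rewrite /subst_sep.
case: (cut_sep j w) E1 E2 => P Q /= E1 E2.
by rewrite E1 !nseps_cat /= add1n; lia.
Qed.

Lemma nsyms_subst_sep j w v : 1 <= j <= nseps w ->
  nsyms (subst_sep j w v) = nsyms w + nsyms v.
Proof.
move=> H; have [E1 E2] := cut_sepP H; rewrite /subst_sep.
case: (cut_sep j w) E1 E2 => P Q /= E1 E2.
by rewrite E1 !nsyms_cat /= add0n; lia.
Qed.

Lemma enc_comps_take_drop l cs : 1 <= l < size cs ->
  enc_comps cs = enc_comps (take l cs) ++ None :: enc_comps (drop l cs).
Proof.
elim: cs l => [|c [|c' cs] IH] [|[|l]] //= H; first by rewrite cats0.
have {}IH := IH l.+1 H; rewrite /= in IH.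
by rewrite !enc_seps_cons [enc_comps (c' :: cs)]/= IH -[RHS]catA.
Qed.

Lemma enc_todot j x y : 1 <= j <= trank x ->
  enc (todot j x y) = subst_sep j (enc x) (enc y).
Proof.
move=> /andP [j1 jx].
have Hj : 1 <= j < size (comps x) by rewrite j1 ltnS.
rewrite /todot !enc_tcat !enc_mk_tup {2}/enc (enc_comps_take_drop Hj).
rewrite subst_sep_cat ?catA // nseps_enc_comps size_take.
by rewrite ltnS jx.
Qed.

Lemma trank_todot j x y : 1 <= j <= trank x ->
  trank (todot j x y) = (trank x).-1 + trank y.
Proof. by move=> H; rewrite !trankE enc_todot // nseps_subst_sep // -trankE. Qed.
Lemma tlen_todot j x y : 1 <= j <= trank x ->
  tlen (todot j x y) = tlen x + tlen y.
Proof. by move=> H; rewrite !tlenE enc_todot // nsyms_subst_sep // -trankE. Qed.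

Lemma trank_dec w : trank (dec w) = nseps w.
Proof. by rewrite trankE decK. Qed.
Lemma tlen_dec w : tlen (dec w) = nsyms w.
Proof. by rewrite tlenE decK. Qed.

Definition eps (r : nat) : tup := ([::], nseq r [::]).

Lemma trank_eps r : trank (eps r) = r.
Proof. exact: size_nseq. Qed.

Lemma tlen0_eps x : tlen x = 0 -> x = eps (trank x).
Proof.
case: x => [c cs]; rewrite /tlen /comps /= /eps /trank /=.
move/eqP; rewrite addn_eq0 size_eq0 => /andP [/eqP -> H]; congr (_, _).
elim: cs H => //= d ds IH; rewrite addn_eq0 size_eq0 => /andP [/eqP -> H].
by rewrite {1}(IH H).
Qed.

End Encoding.

Section Valuation.
Variables (Sigma : finType) (N : Type).
Notation tup := (tup Sigma).
Notation term := (term Sigma N).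
Implicit Types (t a b beta gamma : term) (v w : N -> tup).

Fixpoint tval v t : tup :=
  match t with
  | TTup u => u
  | TNt A => v A
  | TCat a b => tcat (tval v a) (tval v b)
  | TOdot j a b => todot j (tval v a) (tval v b)
  end.

Fixpoint occurs (B : N) t : Prop :=
  match t with
  | TTup _ => False
  | TNt A => A = B
  | TCat a b | TOdot _ a b => occurs B a \/ occurs B b
  end.

Lemma tval_ground v t : nnt t = 0 -> tval v t = nu t.
Proof.
elim: t => //= [a IHa b IHb|j a IHa b IHb] /eqP;
  by rewrite addn_eq0 => /andP [/eqP Ea /eqP Eb]; rewrite IHa // IHb.
Qed.

Lemma occurs_nnt B t : occurs B t -> 0 < nnt t.
Proof.
by elim: t => //= [a IHa b IHb|j a IHa b IHb] [/IHa|/IHb]; rewrite addn_gt0 => ->;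
  rewrite ?orbT.
Qed.

Lemma nnt_occurs t : 0 < nnt t -> exists B, occurs B t.
Proof.
elim: t => //= [A _|a IHa b IHb|j a IHa b IHb]; first by exists A.
all: rewrite addn_gt0 => /orP [/IHa [B HB]|/IHb [B HB]]; exists B; tauto.
Qed.

Lemma occurs_uniq B C t : nnt t = 1 -> occurs B t -> occurs C t -> B = C.
Proof.
elim: t => //= [A _ <- <- //|a IHa b IHb|j a IHa b IHb] E [H|H] [H'|H'];
  have h1 := occurs_nnt H; have h2 := occurs_nnt H';
  try (apply: IHa => //; lia); try (apply: IHb => //; lia); lia.
Qed.

Lemma eq_tval v w t : (forall B, occurs B t -> v B = w B) -> tval v t = tval w t.
Proof.
elim: t => //= [A H|a IHa b IHb H|j a IHa b IHb H]; first exact: H.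
all: by rewrite IHa ?IHb // => B HB; apply: H; tauto.
Qed.

Lemma tval_linear v t B : nnt t = 1 -> occurs B t -> tval v t = tval (fun=> v B) t.
Proof. by move=> E HB; apply: eq_tval => C HC; rewrite (occurs_uniq E HC HB). Qed.

Lemma subst1_nnt B beta t t' : subst1 B beta t t' -> nnt t' + 1 = nnt t + nnt beta.
Proof. by elim => /= *; lia. Qed.

Lemma subst1_occurs B beta t t' : subst1 B beta t t' -> occurs B t.
Proof. by elim => /= *; tauto. Qed.

Lemma subst1_occurs_beta B beta t t' C :
  subst1 B beta t t' -> occurs C beta -> occurs C t'.
Proof. by elim => /= *; tauto. Qed.

Lemma subst1_tval B beta t t' v : subst1 B beta t t' -> nnt t = 1 ->
  tval v t' = tval (fun=> tval v beta) t.
Proof.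
elim => //= [a a' b S IH|a b b' S IH|j a a' b S IH|j a b b' S IH] E;
  have h := occurs_nnt (subst1_occurs S); rewrite IH; try lia.
- by rewrite !(@tval_ground _ b) //; lia.
- by rewrite !(@tval_ground _ a) //; lia.
- by rewrite !(@tval_ground _ b) //; lia.
- by rewrite !(@tval_ground _ a) //; lia.
Qed.

Lemma subst1_exists B beta t : occurs B t -> exists t', subst1 B beta t t'.
Proof.
elim: t => //= [A ->|a IHa b IHb|j a IHa b IHb]; first by exists beta; constructor.
- by case=> [/IHa [a' H]|/IHb [b' H]]; [exists (TCat a' b)|exists (TCat a b')]; constructor.
- by case=> [/IHa [a' H]|/IHb [b' H]];
    [exists (TOdot j a' b)|exists (TOdot j a b')]; constructor.
Qed.

Lemma subst1_id B t s : subst1 B (TNt B) t s -> s = t.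
Proof. by elim => // *; subst. Qed.

Lemma subst1_comp B X t t' t0 s' gamma :
  subst1 B t' t0 s' -> subst1 X gamma t t' ->
  exists2 s, subst1 B t t0 s & subst1 X gamma s s'.
Proof.
elim => [|a a' b _ IH|a b b' _ IH|j a a' b _ IH|j a b b' _ IH] H.
- by exists t => //; constructor.
all: have [s H1 H2] := IH H.
- by exists (TCat s b); constructor.
- by exists (TCat a s); constructor.
- by exists (TOdot j s b); constructor.
- by exists (TOdot j a s); constructor.
Qed.

End Valuation.

Section LinearLanguage.
Variables (Sigma : finType) (G : grammar Sigma).
Notation tup := (tup Sigma).

(* For a linear grammar, [L_G(A)] is the least family closed under the rules. *)
Inductive Llin : nt G -> tup -> Prop :=
| Llin_ground A alpha : List.In (A, alpha) (rules G) -> nnt alpha = 0 ->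
    Llin A (nu alpha)
| Llin_step A alpha B x : List.In (A, alpha) (rules G) -> nnt alpha = 1 ->
    occurs B alpha -> Llin B x -> Llin A (tval (fun=> x) alpha).

Lemma derives_rule A alpha : List.In (A, alpha) (rules G) -> derives G A alpha.
Proof. by move=> Hin; apply: (Der_step Hin (Der_refl _)); constructor. Qed.

Lemma derives_subst1 B beta : derives G B beta ->
  forall A t0 s, derives G A t0 -> subst1 B beta t0 s -> derives G A s.
Proof.
elim => [|X gamma t t' Hin _ IH Hs] A t0 s H0 H1; first by rewrite (subst1_id H1).
have [s0 H2 H3] := subst1_comp H1 Hs.
exact: Der_step Hin (IH _ _ _ H0 H2) H3.
Qed.

Lemma Llin_langA A x : Llin A x -> langA G A x.
Proof.
elim => [{}A alpha Hin E|{}A alpha B {}x Hin E Ho _ [beta [Hd [/eqP Hg Hv]]]].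
  by exists alpha; split; [exact: derives_rule | split => //; apply/eqP].
have [t' Hs] := subst1_exists beta Ho.
have Et' : nnt t' = 0 by have := subst1_nnt Hs; rewrite Hg E; lia.
exists t'; split; first exact: derives_subst1 Hd _ _ _ (derives_rule Hin) Hs.
split; first exact/eqP.
rewrite -(@tval_ground _ _ (fun=> teps) t') // (subst1_tval _ Hs E).
by rewrite (@tval_ground _ _ _ beta) ?Hv.
Qed.

Hypothesis lin : linear_grammar G.

Lemma derives_Llin A t : derives G A t -> nnt t <= 1 /\
  forall v, (forall B, occurs B t -> Llin B (v B)) -> Llin A (tval v t).
Proof.
elim => [|X gamma t0 t' Hin _ [IH1 IH2] Hs]; first by split => // v; apply.
have Hn := subst1_nnt Hs; have Hg := lin Hin.
have HX := subst1_occurs Hs; have Ho := occurs_nnt HX.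
have E1 : nnt t0 = 1 by lia.
split; first lia.
move=> v Hv; rewrite (subst1_tval _ Hs E1); apply: IH2 => B HB.
rewrite (occurs_uniq E1 HB HX).
case: (posnP (nnt gamma)) => Eg; first by rewrite tval_ground //; apply: Llin_ground.
have [C HC] := nnt_occurs Eg; have Eg1 : nnt gamma = 1 by lia.
rewrite (tval_linear _ Eg1 HC); apply: (Llin_step Hin Eg1 HC).
exact: Hv _ (subst1_occurs_beta Hs HC).
Qed.

Lemma langA_Llin A w : langA G A w <-> Llin A w.
Proof.
split; last exact: Llin_langA.
case=> alpha [Hd [Hg <-]]; move/eqP: Hg => Hg; have [_ H] := derives_Llin Hd.
rewrite -(@tval_ground _ _ (fun=> teps) alpha) //.
by apply: H => B HB; have := occurs_nnt HB; rewrite Hg.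
Qed.

End LinearLanguage.
Arguments Llin {Sigma} G _ _.

Section Steps.
Variable Sigma : finType.
Notation tup := (tup Sigma).

Inductive step := LCat of tup | RCat of tup | Odot of nat & tup.

Definition step_arg s : tup := match s with LCat u | RCat u | Odot _ u => u end.

Definition apply_step s (x : tup) : tup :=
  match s with
  | LCat u => tcat u x
  | RCat u => tcat x u
  | Odot j u => todot j x u
  end.

Definition step_rank s (r : nat) : nat :=
  match s with
  | LCat u => trank u + r
  | RCat u => r + trank u
  | Odot j u => (r + trank u).-1
  end.

(* [step_term s Z] is a k-correct right-hand side of shape (1) or (2) when
   [rk Z = r]. *)
Definition step_ok (k : nat) s (r : nat) : bool :=
  match s with
  | LCat u | RCat u => [&& trank u + r <= k, tlen u <= 1 & u != teps]
  | Odot j u => [&& 1 <= j <= k, j <= r, r <= k, r + trank u <= k.+1 & tlen u <= 1]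
  end.

Definition step_term (N : Type) s (Z : N) : term Sigma N :=
  match s with
  | LCat u => TCat (TTup u) (TNt Z)
  | RCat u => TCat (TNt Z) (TTup u)
  | Odot j u => TOdot j (TNt Z) (TTup u)
  end.

Lemma tval_step_term N (v : N -> tup) s Z : tval v (step_term s Z) = apply_step s (v Z).
Proof. by case: s. Qed.

Lemma trank_apply_step k s x : step_ok k s (trank x) ->
  trank (apply_step s x) = step_rank s (trank x).
Proof.
case: s => [u|u|j u] H; rewrite /apply_step /step_rank; try exact: trank_tcat.
case/and5P: H => /andP [j1 _] jr _ _ _; rewrite trank_todot ?j1 //; lia.
Qed.

Lemma tlen_apply_step k s x : step_ok k s (trank x) ->
  tlen (apply_step s x) = tlen x + tlen (step_arg s).
Proof.
case: s => [u|u|j u] H; rewrite /apply_step /step_arg.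
- by rewrite tlen_tcat addnC.
- exact: tlen_tcat.
- by case/and5P: H => /andP [j1 _] jr _ _ _; rewrite tlen_todot ?j1.
Qed.

Lemma tlen_step_arg k s r : step_ok k s r -> tlen (step_arg s) <= 1.
Proof. by case: s => [u|u|j u] /=; [case/and3P|case/and3P|case/and5P]. Qed.

Lemma step_rank_le k s r : step_ok k s r -> step_rank s r <= k.
Proof. by case: s => [u|u|j u] /=; [case/and3P|case/and3P|case/and5P]; lia. Qed.

Lemma step_term_ok (N : Type) (rk : N -> nat) k s Z : step_ok k s (rk Z) ->
  [/\ correct rk k (step_term s Z), trk rk (step_term s Z) = step_rank s (rk Z),
      leaves_short (step_term s Z), nnt (step_term s Z) = 1 & occurs Z (step_term s Z)].
Proof.
case: s => [u|u|j u] /=.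
- case/and3P => H1 H2 H3; split; rewrite /= ?andbT //; last by right.
  by apply/and3P; split; lia.
- case/and3P => H1 H2 H3; split; rewrite /= ?andbT //; last by left.
  by apply/and3P; split; lia.
- case/and5P => /andP [j1 jk] jr rk1 H4 H5; split; rewrite /= ?andbT //; last by left.
  by apply/and5P; split => //; lia.
Qed.

Definition apply_steps (ss : seq step) x := foldr apply_step x ss.
Definition steps_rank (ss : seq step) r := foldr step_rank r ss.
Fixpoint steps_ok k r (ss : seq step) : bool :=
  if ss is s :: ss' then steps_ok k r ss' && step_ok k s (steps_rank ss' r) else true.

Lemma steps_ok_cons k r s ss :
  steps_ok k r (s :: ss) = steps_ok k r ss && step_ok k s (steps_rank ss r).
Proof. by []. Qed.

Lemma apply_steps_cat s1 s2 x : apply_steps (s1 ++ s2) x = apply_steps s1 (apply_steps s2 x).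
Proof. exact: foldr_cat. Qed.
Lemma steps_rank_cat s1 s2 r : steps_rank (s1 ++ s2) r = steps_rank s1 (steps_rank s2 r).
Proof. exact: foldr_cat. Qed.
Lemma steps_ok_cat k r s1 s2 :
  steps_ok k r (s1 ++ s2) = steps_ok k r s2 && steps_ok k (steps_rank s2 r) s1.
Proof.
elim: s1 => [|s s1 IH] /=; first by rewrite andbT.
by rewrite IH steps_rank_cat andbA.
Qed.

Lemma trank_apply_steps k ss x : steps_ok k (trank x) ss ->
  trank (apply_steps ss x) = steps_rank ss (trank x).
Proof.
elim: ss => //= s ss IH /andP [H1 H2].
by rewrite (trank_apply_step (k := k)) IH.
Qed.

End Steps.

Section StepChains.
Variable Sigma : finType.
Notation tup := (tup Sigma).
Notation word := (seq (option Sigma)).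
Notation step := (step Sigma).
Implicit Types (q P Q : word) (x y u : tup) (ss : seq step).

Lemma nseps_None q : nseps (None :: q) = (nseps q).+1.
Proof. exact: add1n. Qed.
Lemma nseps_Some (a : Sigma) q : nseps (Some a :: q) = nseps q.
Proof. by []. Qed.
Lemma nseps_cons o q : nseps (o :: q) = nseps [:: o] + nseps q.
Proof. by rewrite /nseps /= addn0. Qed.

Definition letter (o : option Sigma) : tup := dec [:: o].

Lemma enc_letter o : enc (letter o) = [:: o].
Proof. exact: decK. Qed.

Lemma letter_neq0 o : letter o != teps.
Proof. by apply/eqP => E; have := enc_letter o; rewrite E. Qed.

Lemma letter_ok k r o : r + nseps [:: o] <= k ->
  step_ok k (LCat (letter o)) r && step_ok k (RCat (letter o)) r.
Proof.
rewrite /= !trank_dec !tlen_dec letter_neq0 !andbT.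
by case: o => [a|] H; rewrite /nseps /nsyms /= in H *; apply/andP; split; lia.
Qed.

Definition lcat_steps q : seq step := [seq LCat (letter o) | o <- q].
Definition rcat_steps q : seq step := rev [seq RCat (letter o) | o <- q].

Lemma enc_lcat_steps q x : enc (apply_steps (lcat_steps q) x) = q ++ enc x.
Proof. by elim: q => //= o q IH; rewrite enc_tcat enc_letter IH. Qed.

Lemma enc_rcat_steps q x : enc (apply_steps (rcat_steps q) x) = enc x ++ q.
Proof.
elim: q x => [|o q IH] x /=; first by rewrite cats0.
rewrite /rcat_steps /= rev_cons -cats1 apply_steps_cat -/(rcat_steps q) IH /=.
by rewrite enc_tcat enc_letter -catA.
Qed.

Lemma apply_lcat_steps u y : apply_steps (lcat_steps (enc u)) y = tcat u y.
Proof. by apply: enc_inj; rewrite enc_lcat_steps enc_tcat. Qed.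

Lemma apply_rcat_steps u y : apply_steps (rcat_steps (enc u)) y = tcat y u.
Proof. by apply: enc_inj; rewrite enc_rcat_steps enc_tcat. Qed.

Lemma lcat_steps_ok k r q : r + nseps q <= k ->
  steps_ok k r (lcat_steps q) /\ steps_rank (lcat_steps q) r = r + nseps q.
Proof.
elim: q => [|o q IH]; first by rewrite addn0.
rewrite nseps_cons steps_ok_cons => H; have [-> rank] := IH ltac:(lia).
have /andP [ok _] := @letter_ok k (r + nseps q) o ltac:(lia).
rewrite rank ok; split => //=.
by rewrite rank trank_dec /nseps /= in H *; lia.
Qed.

Lemma rcat_steps_ok k r q : r + nseps q <= k ->
  steps_ok k r (rcat_steps q) /\ steps_rank (rcat_steps q) r = r + nseps q.
Proof.
elim: q r => [|o q IH] r; first by rewrite addn0.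
rewrite nseps_cons => H.
have -> : rcat_steps (o :: q) = rcat_steps q ++ [:: RCat (letter o)].
  by rewrite /rcat_steps /= rev_cons -cats1.
have /andP [_ ok] := @letter_ok k r o ltac:(lia).
have [okq rankq] := IH (r + nseps [:: o]) ltac:(lia).
rewrite steps_ok_cat steps_rank_cat.
have -> : steps_rank [:: RCat (letter o)] r = r + nseps [:: o] by rewrite /= trank_dec.
by rewrite okq rankq (ok : steps_ok k r [:: RCat (letter o)]); split => //; lia.
Qed.

(* [x (.)_j u] is built by first turning the [j]-th separator of [x] into the
   symbols of [u] before its first separator (one [(.)_j] with [(a, e)] per
   symbol [a]), then inserting the rest of [u] right after that separator, or
   deleting it by [(.)_j e] when [u] has no separator. *)
Fixpoint odot_right_steps j q : seq step :=
  match q with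
  | [::] => [:: Odot j teps]
  | None :: q' => [seq Odot j (dec [:: None; o]) | o <- q']
  | Some a :: q' => rcons (odot_right_steps j q') (Odot j (dec [:: Some a; None]))
  end.

Lemma enc_todot_sep j y u P Q : 1 <= j -> enc y = P ++ None :: Q -> nseps P = j.-1 ->
  enc (todot j y u) = P ++ enc u ++ Q.
Proof.
move=> J Ey EP; rewrite enc_todot ?Ey ?subst_sep_cat // J trankE Ey.
by rewrite nseps_cat nseps_None EP; lia.
Qed.

Lemma enc_odot_right_steps j q P Q y : 1 <= j -> enc y = P ++ None :: Q ->
  nseps P = j.-1 -> enc (apply_steps (odot_right_steps j q) y) = P ++ q ++ Q.
Proof.
elim: q P y => [|[a|] q IH] P y J Ey EP /=.
- by rewrite (enc_todot_sep _ J Ey EP).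
- rewrite /apply_steps foldr_rcons -/(apply_steps _ _) (IH (rcons P (Some a))) //.
  + by rewrite cat_rcons.
  + by rewrite /= (enc_todot_sep _ J Ey EP) decK -cats1 -catA.
  + by rewrite -cats1 nseps_cat EP addn0.
- elim: q {IH} => [|o q IHq] /=; first by rewrite Ey.
  by rewrite (enc_todot_sep _ J IHq EP) decK.
Qed.

Lemma apply_odot_right_steps j u y : 1 <= j <= trank y ->
  apply_steps (odot_right_steps j (enc u)) y = todot j y u.
Proof.
move=> H; apply: enc_inj; rewrite enc_todot // /subst_sep.
rewrite trankE in H; have [Ey EP] := cut_sepP H.
case: (cut_sep j (enc y)) Ey EP => P Q /= Ey EP.
by apply: enc_odot_right_steps; case/andP: H.
Qed.

Lemma sep_then_steps_ok k j r q : 1 <= j <= k -> j <= r -> r + nseps q <= k ->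
  steps_ok k r [seq Odot j (dec [:: None; o]) | o <- q]
  /\ steps_rank [seq Odot j (dec [:: None; o]) | o <- q] r = r + nseps q.
Proof.
move=> J1 J2; elim: q => [|o q IH] /= H; first by rewrite addn0.
have [-> ->] := IH ltac:(lia).
rewrite trank_dec tlen_dec J1 /nseps /nsyms /= in H *.
by case: (o == None) H => /= H; split => //; lia.
Qed.

Lemma odot_right_steps_ok k j r q : 1 <= j <= k -> j <= r -> r <= k ->
  r + nseps q <= k.+1 ->
  steps_ok k r (odot_right_steps j q) /\ steps_rank (odot_right_steps j q) r = (r + nseps q).-1.
Proof.
move=> J1 J2 R; elim: q => [|[a|] q IH] Hq.
- by rewrite /= J1 J2 R addn0 (leqW R).
- rewrite nseps_Some in Hq *; have [okq rankq] := IH Hq.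
  set s := Odot j (dec [:: Some a; None]).
  have oks : steps_ok k r [:: s].
    by rewrite /= trank_dec tlen_dec J1 J2 R /nseps /nsyms /=; lia.
  have rks : steps_rank [:: s] r = r by rewrite /= trank_dec /nseps /=; lia.
  have -> : odot_right_steps j (Some a :: q) = odot_right_steps j q ++ [:: s] by rewrite cats1.
  by rewrite steps_ok_cat steps_rank_cat oks rks okq rankq.
- rewrite nseps_None addnS in Hq *; exact: sep_then_steps_ok.
Qed.

(* [u (.)_j y] is [y] with the part of [u] before its [j]-th separator added on
   the left and the part after it on the right. *)
Definition odot_left_steps j q : seq step :=
  lcat_steps (cut_sep j q).1 ++ rcat_steps (cut_sep j q).2.

Lemma apply_odot_left_steps j u y : 1 <= j <= trank u ->
  apply_steps (odot_left_steps j (enc u)) y = todot j u y.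
Proof.
move=> H; apply: enc_inj.
rewrite enc_todot // /odot_left_steps apply_steps_cat enc_lcat_steps enc_rcat_steps.
rewrite trankE in H; have [Eu EP] := cut_sepP H.
case: (cut_sep j (enc u)) Eu EP => P Q /= Eu EP.
by rewrite [in RHS]Eu subst_sep_cat ?catA //; case/andP: H.
Qed.

Lemma odot_left_steps_ok k j r q : 1 <= j <= nseps q -> r + nseps q <= k.+1 ->
  steps_ok k r (odot_left_steps j q) /\ steps_rank (odot_left_steps j q) r = (r + nseps q).-1.
Proof.
move=> H Hq; have [Eq EP] := cut_sepP H.
rewrite /odot_left_steps; case: (cut_sep j q) Eq EP => P Q /= Eq EP.
have Enn : nseps q = (nseps P + nseps Q).+1 by rewrite {1}Eq nseps_cat nseps_None addnS.
rewrite steps_ok_cat steps_rank_cat.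
have [-> ->] := @rcat_steps_ok k r Q ltac:(lia).
have [-> ->] := @lcat_steps_ok k (r + nseps Q) P ltac:(lia).
by split => //; lia.
Qed.

(* A ground tuple is one of its symbols (or [e]) extended by concatenations. *)
Fixpoint ground_steps q : seq step * tup :=
  match q with
  | [::] => ([::], teps)
  | Some a :: q' => (rcat_steps q', letter (Some a))
  | None :: q' => (LCat (letter None) :: (ground_steps q').1, (ground_steps q').2)
  end.

Lemma ground_steps_spec k q : nseps q <= k ->
  let: (ss, g) := ground_steps q in
  [/\ enc (apply_steps ss g) = q, tlen g <= 1, trank g = 0,
      steps_ok k 0 ss & steps_rank ss 0 = nseps q].
Proof.
elim: q => [|[a|] q IH]; first by split.
- rewrite nseps_Some => Hq; have [ok rank] := @rcat_steps_ok k 0 q Hq.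
  by split; rewrite ?enc_rcat_steps ?enc_letter ?trank_dec ?tlen_dec.
- rewrite nseps_None => Hq /=; case: (ground_steps q) (IH (ltnW Hq)) => ss g.
  case=> Ess Hg Rg ok rank; split => //=.
  + by rewrite enc_tcat enc_letter Ess.
  + have /andP [okL _] := @letter_ok k (nseps q) None ltac:(by rewrite (_ : nseps [:: None] = 1) // addn1).
    by rewrite ok rank.
  + by rewrite rank trank_dec.
Qed.

End StepChains.

Inductive chain_base (Sigma : finType) (N : Type) :=
  BaseNt of N | BaseTup of tup Sigma.
Arguments BaseNt {Sigma N}.
Arguments BaseTup {Sigma N}.

Section TermChain.
Variables (Sigma : finType) (N : Type) (rk : N -> nat) (k : nat).
Notation tup := (tup Sigma).
Notation term := (term Sigma N).
Notation step := (step Sigma).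
Implicit Types (t a b : term) (ss : seq step) (c : seq step * chain_base Sigma N).

Lemma trk_le t : correct rk k t -> trk rk t <= k.
Proof. by case: t => //= [a b /and3P [_ _ H]|j a b /and5P [_ _ _ _ H]]; lia. Qed.

Lemma trank_tval v t : correct rk k t -> (forall B, occurs B t -> trank (v B) = rk B) ->
  trank (tval v t) = trk rk t.
Proof.
elim: t => //= [A _ H|a IHa b IHb /and3P [ca cb _] H|j a IHa b IHb /and5P [ca cb J1 J2 _] H].
- exact: H.
- by rewrite trank_tcat IHa ?IHb // => B HB; apply: H; tauto.
- have Ra : trank (tval v a) = trk rk a by apply: IHa => // B HB; apply: H; left.
  have Rb : trank (tval v b) = trk rk b by apply: IHb => // B HB; apply: H; right.
  rewrite trank_todot Ra ?Rb; first lia.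
  by rewrite J2 andbT; case/andP: J1.
Qed.

Lemma trank_nu t : correct rk k t -> nnt t = 0 -> trank (nu t) = trk rk t.
Proof.
move=> C E; rewrite -(tval_ground (fun=> teps) E); apply: trank_tval => // B HB.
by have := occurs_nnt HB; rewrite E.
Qed.

Definition ground_chain (u : tup) : seq step * chain_base Sigma N :=
  ((ground_steps (enc u)).1, BaseTup (ground_steps (enc u)).2).

(* A linear term [t] with nonterminal [B] has value [apply_steps ss x] when [B]
   has value [x]; a ground term is [apply_steps ss g] for a tuple [|g| <= 1]. *)
Fixpoint chain t : seq step * chain_base Sigma N :=
  match t with
  | TTup u => ground_chain u
  | TNt B => ([::], BaseNt B)
  | TCat a b =>
      if nnt a != 0 then (rcat_steps (enc (nu b)) ++ (chain a).1, (chain a).2)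
      else if nnt b != 0 then (lcat_steps (enc (nu a)) ++ (chain b).1, (chain b).2)
      else ground_chain (nu (TCat a b))
  | TOdot j a b =>
      if nnt a != 0 then (odot_right_steps j (enc (nu b)) ++ (chain a).1, (chain a).2)
      else if nnt b != 0 then (odot_left_steps j (enc (nu a)) ++ (chain b).1, (chain b).2)
      else ground_chain (nu (TOdot j a b))
  end.

Definition chain_spec t c : Prop :=
  match c with
  | (ss, BaseNt B) =>
      [/\ occurs B t, forall x, trank x = rk B -> tval (fun=> x) t = apply_steps ss x,
          steps_ok k (rk B) ss & steps_rank ss (rk B) = trk rk t]
  | (ss, BaseTup g) =>
      [/\ nnt t = 0, nu t = apply_steps ss g, tlen g <= 1 /\ trank g = 0,
          steps_ok k 0 ss & steps_rank ss 0 = trk rk t]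
  end.
Arguments chain_spec : simpl never.

Lemma ground_chain_spec t : correct rk k t -> nnt t = 0 -> chain_spec t (ground_chain (nu t)).
Proof.
move=> C E; have := @ground_steps_spec _ k (enc (nu t)).
rewrite -trankE trank_nu // /ground_chain; case: (ground_steps _) => ss g.
case/(_ (trk_le C)) => Ess Hg Rg ok rank; rewrite /chain_spec /=.
by split => //; apply: enc_inj.
Qed.

Lemma chain_spec_ctx t t' c (f : tup -> tup) ss' :
  chain_spec t c -> 0 < nnt t -> (forall B, occurs B t -> occurs B t') ->
  (forall x, tval (fun=> x) t' = f (tval (fun=> x) t)) ->
  (forall y, trank y = trk rk t -> f y = apply_steps ss' y) ->
  steps_ok k (trk rk t) ss' -> steps_rank ss' (trk rk t) = trk rk t' ->
  chain_spec t' (ss' ++ c.1, c.2).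
Proof.
case: c => ss [B|g]; rewrite /chain_spec /=; last by case=> ->.
case=> occB Hss ok rank _ occ' Hf Hss' ok' rank'; split; first exact: occ'.
- move=> x Hx; rewrite Hf Hss // apply_steps_cat -Hss' //.
  by rewrite (@trank_apply_steps _ k) Hx // Hx.
- by rewrite steps_ok_cat ok rank ok'.
- by rewrite steps_rank_cat rank.
Qed.

Section Cases.
Variables (a b : term).
Hypothesis IHa : correct rk k a -> nnt a <= 1 -> chain_spec a (chain a).
Hypothesis IHb : correct rk k b -> nnt b <= 1 -> chain_spec b (chain b).

Lemma chain_spec_TCat : correct rk k (TCat a b) -> nnt (TCat a b) <= 1 ->
  chain_spec (TCat a b) (chain (TCat a b)).
Proof.
move=> C; have /and3P [ca cb Hk] := C; move=> /= Hn; have Ra := trk_le ca; have Rb := trk_le cb.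
case: ifPn => [Ea | /negPn/eqP Ea]; last case: ifPn => [Eb | /negPn/eqP Eb].
- have Eb : nnt b = 0 by lia.
  have [okR rkR] : steps_ok k (trk rk a) (rcat_steps (enc (nu b))) /\
      steps_rank (rcat_steps (enc (nu b))) (trk rk a) = trk rk a + trk rk b.
    rewrite -[trk rk b](trank_nu cb Eb) trankE; apply: rcat_steps_ok.
    by rewrite -trankE trank_nu //; lia.
  apply: (chain_spec_ctx (t' := TCat a b) (f := fun y => tcat y (nu b)))
    (IHa ca _) _ _ _ _ okR rkR; try lia.
  + by move=> B; left.
  + by move=> x /=; rewrite (tval_ground _ Eb).
  + by move=> y _; rewrite apply_rcat_steps.
- have [okL rkL] : steps_ok k (trk rk b) (lcat_steps (enc (nu a))) /\
      steps_rank (lcat_steps (enc (nu a))) (trk rk b) = trk rk b + trk rk a.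
    rewrite -[trk rk a](trank_nu ca Ea) trankE; apply: lcat_steps_ok.
    by rewrite -trankE trank_nu //; lia.
  apply: (chain_spec_ctx (t' := TCat a b) (f := fun y => tcat (nu a) y))
    (IHb cb _) _ _ _ _ okL _; try lia.
  + by move=> B; right.
  + by move=> x /=; rewrite tval_ground.
  + by move=> y _; rewrite apply_lcat_steps.
  + by rewrite rkL addnC.
- by apply: (ground_chain_spec C); rewrite /= Ea Eb.
Qed.

Lemma chain_spec_TOdot j : correct rk k (TOdot j a b) -> nnt (TOdot j a b) <= 1 ->
  chain_spec (TOdot j a b) (chain (TOdot j a b)).
Proof.
move=> C; have /and5P [ca cb /andP [j1 jk] J2 Hk] := C; move=> /= Hn; have Ra := trk_le ca; have Rb := trk_le cb.
case: ifPn => [Ea | /negPn/eqP Ea]; last case: ifPn => [Eb | /negPn/eqP Eb].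
- have Eb : nnt b = 0 by lia.
  have [okR rkR] : steps_ok k (trk rk a) (odot_right_steps j (enc (nu b))) /\
      steps_rank (odot_right_steps j (enc (nu b))) (trk rk a) = (trk rk a + trk rk b).-1.
    rewrite -[trk rk b](trank_nu cb Eb) trankE; apply: odot_right_steps_ok;
      rewrite ?j1 -?trankE ?trank_nu //; lia.
  apply: (chain_spec_ctx (t' := TOdot j a b) (f := fun y => todot j y (nu b)))
    (IHa ca _) _ _ _ _ okR rkR; try lia.
  + by move=> B; left.
  + by move=> x /=; rewrite (tval_ground _ Eb).
  + by move=> y Hy; rewrite apply_odot_right_steps // Hy j1.
- have [okL rkL] : steps_ok k (trk rk b) (odot_left_steps j (enc (nu a))) /\
      steps_rank (odot_left_steps j (enc (nu a))) (trk rk b) = (trk rk b + trk rk a).-1.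
    rewrite -[trk rk a](trank_nu ca Ea) trankE; apply: odot_left_steps_ok;
      rewrite -trankE trank_nu ?j1 //; lia.
  apply: (chain_spec_ctx (t' := TOdot j a b) (f := fun y => todot j (nu a) y))
    (IHb cb _) _ _ _ _ okL _; try lia.
  + by move=> B; right.
  + by move=> x /=; rewrite tval_ground.
  + by move=> y _; rewrite apply_odot_left_steps // trank_nu // j1.
  + by rewrite rkL addnC.
- by apply: (ground_chain_spec C); rewrite /= Ea Eb.
Qed.

End Cases.

Lemma chain_specP t : correct rk k t -> nnt t <= 1 -> chain_spec t (chain t).
Proof.
elim: t => [u|B|a IHa b IHb|j a IHa b IHb].
- by move=> C _; exact: (@ground_chain_spec (TTup u)).
- by rewrite /chain_spec.
- exact: chain_spec_TCat.
- exact: chain_spec_TOdot.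
Qed.

End TermChain.

(* The normal rules depend on undecidable facts about the pre-normal grammar
   (reachability by unit rules, derivability of [e]), hence a classical choice. *)
Definition asbool (P : Prop) : bool := if excluded_middle_informative P then true else false.

Lemma asboolP (P : Prop) : reflect P (asbool P).
Proof. by rewrite /asbool; case: excluded_middle_informative => H; constructor. Qed.

Lemma mem_In (T : eqType) (x : T) s : x \in s -> List.In x s.
Proof. by elim: s => //= y s IH; rewrite inE => /orP [/eqP ->|/IH]; auto. Qed.

Inductive prerule (Sigma : finType) (N : Type) :=
| PStep of step Sigma & N | PUnit of N | PGround of tup Sigma.
Arguments PStep {Sigma N}.
Arguments PUnit {Sigma N}.
Arguments PGround {Sigma N}.

Section Normalize.
Variables (Sigma : finType) (k : nat) (NT : finType) (rk : NT -> nat) (S : NT).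
Variable pre : seq (NT * prerule Sigma NT).
Notation tup := (tup Sigma).

Definition prerule_ok (X : NT) (r : prerule Sigma NT) : bool :=
  match r with
  | PStep s Z => step_ok k s (rk Z) && (rk X == step_rank s (rk Z))
  | PUnit Z => rk X == rk Z
  | PGround g => [&& tlen g <= 1, trank g == rk X & rk X <= k]
  end.

Inductive Lpre : NT -> tup -> Prop :=
| Lpre_ground X g : List.In (X, PGround g) pre -> Lpre X g
| Lpre_unit X Z x : List.In (X, PUnit Z) pre -> Lpre Z x -> Lpre X x
| Lpre_step X s Z x : List.In (X, PStep s Z) pre -> Lpre Z x -> Lpre X (apply_step s x).

Inductive unit_reach : NT -> NT -> Prop :=
| unit_reach_refl X : unit_reach X X
| unit_reach_step X Y Z : List.In (X, PUnit Y) pre -> unit_reach Y Z -> unit_reach X Z.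

Hypothesis pre_ok : forall X r, List.In (X, r) pre -> prerule_ok X r.
Hypothesis rkS : rk S = 0.

Lemma unit_reach_trans X Y Z : unit_reach X Y -> unit_reach Y Z -> unit_reach X Z.
Proof. by elim => [//|X0 Y0 Z0 H _ IH /IH]; apply: unit_reach_step. Qed.

Lemma Lpre_unit_reach X Y x : unit_reach X Y -> Lpre Y x -> Lpre X x.
Proof. by elim => [//|X0 Y0 Z0 H _ IH /IH]; apply: Lpre_unit. Qed.

Lemma unit_reach_rk X Y : unit_reach X Y -> rk X = rk Y.
Proof. by elim => [//|X0 Y0 Z0 /pre_ok /eqP -> _ <-]. Qed.

Lemma trank_Lpre X x : Lpre X x -> trank x = rk X.
Proof.
elim => [X0 g /pre_ok /and3P [_ /eqP -> _] //|X0 Z x0 /pre_ok /eqP -> _ -> //|].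
move=> X0 s Z x0 /pre_ok /andP [ok /eqP ->] _ IH.
by rewrite (@trank_apply_step _ k) IH.
Qed.

(* Unit rules are eliminated by saturation, and ground rules of length [0] by
   adding [X -> s(e)] next to [X -> s(Z)] whenever [Z] derives the empty tuple
   [e] and [s(e)] has length [1]. *)
Definition normalize_prerule (X : NT) (r : prerule Sigma NT) : seq (NT * term Sigma NT) :=
  match r with
  | PStep s Z => (X, step_term s Z) ::
      (if asbool (Lpre Z (eps _ (rk Z))) && (tlen (apply_step s (eps _ (rk Z))) == 1)
       then [:: (X, TTup (apply_step s (eps _ (rk Z))))] else [::])
  | PUnit _ => [::]
  | PGround g => if tlen g == 1 then [:: (X, TTup g)] else [::]
  end.

Definition normal_rules : seq (NT * term Sigma NT) :=
  List.flat_map (fun X => List.flat_map (fun Yr : NT * prerule Sigma NT =>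
      if asbool (unit_reach X Yr.1) then normalize_prerule X Yr.2 else [::]) pre) (enum NT)
  ++ (if asbool (Lpre S teps) then [:: (S, TTup teps)] else [::]).

Definition Gnorm : grammar Sigma := @Grammar Sigma NT rk normal_rules S.

Variant normal_rule_spec (X : NT) : term Sigma NT -> Prop :=
| NStep Y s Z of unit_reach X Y & List.In (Y, PStep s Z) pre :
    normal_rule_spec X (step_term s Z)
| NStepEps Y s Z of unit_reach X Y & List.In (Y, PStep s Z) pre &
    Lpre Z (eps _ (rk Z)) & tlen (apply_step s (eps _ (rk Z))) = 1 :
    normal_rule_spec X (TTup (apply_step s (eps _ (rk Z))))
| NGround Y g of unit_reach X Y & List.In (Y, PGround g) pre & tlen g = 1 :
    normal_rule_spec X (TTup g)
| NEps of X = S & Lpre S teps : normal_rule_spec X (TTup teps).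

Lemma normal_rulesP X alpha : List.In (X, alpha) normal_rules -> normal_rule_spec X alpha.
Proof.
move=> H; case: (List.in_app_or _ _ _ H) => {H}.
  case/List.in_flat_map => X0 [_ /List.in_flat_map [[Y r] [Hin]]] /=.
  case: asboolP => // HU; case: r Hin => [s Z|Z|g] Hin //=.
  - case=> [[<- <-]|]; first exact: NStep HU Hin.
    case: ifP => // /andP [/asboolP H1 /eqP H2] [] // [<- <-].
    exact: NStepEps HU Hin H1 H2.
  - by case: ifP => // /eqP H [] // [<- <-]; apply: NGround HU Hin H.
by case: asboolP => // H [] // [<- <-]; apply: NEps.
Qed.

Lemma normal_rules_in X Y r alpha : unit_reach X Y -> List.In (Y, r) pre ->
  List.In (X, alpha) (normalize_prerule X r) -> List.In (X, alpha) normal_rules.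
Proof.
move=> HU Hin Hm; apply: List.in_or_app; left.
apply/List.in_flat_map; exists X; split; first by apply: mem_In; rewrite mem_enum.
apply/List.in_flat_map; exists (Y, r); split => //=.
by case: asboolP.
Qed.

Lemma Gnorm_kdcfg : is_kdcfg k Gnorm.
Proof.
split => // A alpha; case/normal_rulesP => [Y s Z HU /pre_ok/andP [ok /eqP rkY]|
  Y s Z HU /pre_ok/andP [ok /eqP rkY] _ Hl|Y g HU /pre_ok/and3P [_ /eqP Hg Hk] Hl|-> _].
- have [C T L _ _] := step_term_ok ok.
  by split; rewrite //= (unit_reach_rk HU) rkY T.
- have R := @trank_apply_step _ k s (eps _ (rk Z)); rewrite trank_eps in R.
  by split; rewrite /= ?R ?(unit_reach_rk HU) ?rkY ?Hl ?(step_rank_le ok).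
- by split; rewrite /= ?Hg ?Hl ?(unit_reach_rk HU).
- by split; rewrite /= ?rkS.
Qed.

Lemma Gnorm_normal A alpha : List.In (A, alpha) (rules Gnorm) -> normal_rule Gnorm A alpha.
Proof.
case/normal_rulesP => [Y s Z _ /pre_ok /andP [ok _]|Y s Z|Y g|-> _].
- case: s ok => [u|u|j u] /=.
  + by case/and3P => _ H2 /eqP H3; left; exists u, Z; split => //; left.
  + by case/and3P => _ H2 /eqP H3; left; exists u, Z; split => //; right.
  + by case/and5P => _ _ _ _ H5; right; left; exists Z, j, u.
- by right; right; left; eexists.
- by right; right; left; eexists.
- by right; right; right.
Qed.

Lemma Gnorm_linear : linear_grammar Gnorm.
Proof. by move=> A alpha /normal_rulesP [Y s Z _ _|||] //; case: s. Qed.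

Lemma Llin_Gnorm_Lpre X x : Llin Gnorm X x -> Lpre X x.
Proof.
elim => [A alpha Hin|A alpha B x0 Hin _ occB _ IH].
  case: {Hin}(normal_rulesP Hin) => [Y s Z _ _|Y s Z HU Hin HL _|Y g HU Hin _|-> //] E.
  - by case: s E.
  - exact: Lpre_unit_reach HU (Lpre_step Hin HL).
  - exact: Lpre_unit_reach HU (Lpre_ground Hin).
case: {Hin}(normal_rulesP Hin) occB => [Y s Z HU Hin|Y s Z|Y g|_ _] //= occB.
have EB : B = Z by case: s {Hin} occB => /= *; intuition.
subst B.
by rewrite tval_step_term; apply: Lpre_unit_reach HU (Lpre_step Hin IH).
Qed.

Lemma normal_rules_unit_reach X Z alpha : unit_reach X Z -> List.In (Z, alpha) normal_rules ->
  List.In (X, alpha) normal_rules \/ alpha = TTup teps.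
Proof.
move=> HXZ /normal_rulesP [Y s Z' HU Hin|Y s Z' HU Hin HL Ht|Y g HU Hin Ht|_ _]; last by right.
all: left; apply: (normal_rules_in (unit_reach_trans HXZ HU) Hin) => /=.
- by left.
- by right; case: asboolP => // _; rewrite Ht eqxx /=; left.
- by rewrite Ht eqxx /=; left.
Qed.

Lemma Llin_Gnorm_unit X Z x : unit_reach X Z -> Llin Gnorm Z x -> 0 < tlen x ->
  Llin Gnorm X x.
Proof.
move=> HU H; case: H HU => [A alpha Hin E|A alpha B x0 Hin E Ho HB] HU Ht.
  case: (normal_rules_unit_reach HU Hin) => [H|Ea]; first exact: (@Llin_ground _ Gnorm _ _ H E).
  by move: Ht; rewrite Ea.
case: (normal_rules_unit_reach HU Hin) => [H|Ea]; first exact: (@Llin_step _ Gnorm _ _ _ _ H E Ho HB).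
by move: E; rewrite Ea.
Qed.

Lemma Llin_Gnorm_ground X g : List.In (X, TTup g) normal_rules -> Llin Gnorm X g.
Proof. by move=> Hin; apply: (@Llin_ground _ Gnorm X (TTup g) Hin). Qed.

Lemma Lpre_Llin_Gnorm X x : Lpre X x -> 0 < tlen x -> Llin Gnorm X x.
Proof.
elim => [X0 g Hin|X0 Z x0 Hin _ IH|X0 s Z x0 Hin HL IH] Ht.
- have /and3P [H1 _ _] := pre_ok Hin.
  apply: Llin_Gnorm_ground (normal_rules_in (unit_reach_refl _) Hin _) => /=.
  by rewrite (_ : tlen g = 1) ?eqxx /=; [left | lia].
- exact: Llin_Gnorm_unit (unit_reach_step Hin (unit_reach_refl _)) (IH Ht) Ht.
- have /andP [ok _] := pre_ok Hin; have Rx := trank_Lpre HL.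
  have Et := @tlen_apply_step _ k s x0; rewrite Rx in Et; have {}Et := Et ok.
  case: (posnP (tlen x0)) => Ex.
  + have Ee : x0 = eps _ (rk Z) by rewrite -Rx; exact: tlen0_eps.
    have Hs : tlen (apply_step s x0) = 1 by have := tlen_step_arg ok; lia.
    apply: Llin_Gnorm_ground (normal_rules_in (unit_reach_refl _) Hin _) => /=; right.
    by case: asboolP => [_|]; rewrite -Ee // Hs eqxx /=; left.
  + have [_ _ _ N1 O1] := step_term_ok ok.
    rewrite -(@tval_step_term _ _ (fun=> x0) s Z); apply: (@Llin_step _ Gnorm _ _ _ _ _ N1 O1 (IH Ex)).
    by apply: (normal_rules_in (unit_reach_refl _) Hin); left.
Qed.

Lemma Llin_Gnorm_start w : Llin Gnorm S w <-> Lpre S w.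
Proof.
split; first exact: Llin_Gnorm_Lpre.
move=> H; case: (posnP (tlen w)) => Ew; last exact: Lpre_Llin_Gnorm.
have Ew' : w = teps by rewrite (tlen0_eps Ew) (trank_Lpre H) rkS.
subst w; apply: Llin_Gnorm_ground; apply: List.in_or_app; right.
by case: asboolP => [_|[]] //; left.
Qed.

End Normalize.

Lemma In_nth (T : Type) (d : T) (s : seq T) i : i < size s -> List.In (nth d s i) s.
Proof. by elim: s i => [|x s IH] [|i] //= H; [left | right; apply: IH]. Qed.

Lemma In_nthP (T : Type) (d : T) (s : seq T) x :
  List.In x s -> exists2 i, i < size s & nth d s i = x.
Proof. by elim: s => [|y s IH] //= [->|/IH [i Hi E]]; [exists 0 | exists i.+1]. Qed.

Section PreNormalForm.
Variables (Sigma : finType) (k : nat) (G : grammar Sigma).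
Hypothesis kG : is_kdcfg k G.
Hypothesis linG : linear_grammar G.
Notation NT := (nt G).
Notation tup := (tup Sigma).
Notation rkG := (rk G).

Definition nb_rules := size (rules G).
Definition rule (i : nat) := nth (start G, TNt (start G)) (rules G) i.
Definition rule_chain (i : nat) := chain (rule i).2.
Definition rule_steps (i : nat) := (rule_chain i).1.
Definition nsteps (i : nat) := size (rule_steps i).
Definition max_nsteps := \max_(i < nb_rules) nsteps i.

Definition base_rank (i : nat) : nat :=
  if (rule_chain i).2 is BaseNt B then rkG B else 0.

(* Rule [i] is split along its chain [s_0, ..., s_(m-1)] of steps as
   [A = X_0 -> s_0(X_1)], ..., [X_(m-1) -> s_(m-1)(X_m)], and [X_m] rewrites
   to the base of the chain by a unit or a ground rule; [X_t] is [inr (i, t)]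
   for [0 < t]. *)
Definition ext_nt : finType := (NT + ('I_nb_rules * 'I_max_nsteps.+1))%type.

Definition mid (i : 'I_nb_rules) (t : nat) : ext_nt :=
  if t == 0 then inl (rule i).1 else inr (i, inord t).

Definition ext_rk (X : ext_nt) : nat :=
  match X with
  | inl A => rkG A
  | inr (i, t) => steps_rank (drop t (rule_steps i)) (base_rank i)
  end.

Definition base_prerule (i : nat) : prerule Sigma ext_nt :=
  match (rule_chain i).2 with BaseNt B => PUnit (inl B) | BaseTup g => PGround g end.

Definition step0 : step Sigma := LCat teps.

Definition chain_prerules (i : 'I_nb_rules) : seq (ext_nt * prerule Sigma ext_nt) :=
  rcons [seq (mid i t, PStep (nth step0 (rule_steps i) t) (mid i t.+1)) | t <- iota 0 (nsteps i)]
        (mid i (nsteps i), base_prerule i).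

Definition prerules : seq (ext_nt * prerule Sigma ext_nt) :=
  List.flat_map chain_prerules (enum 'I_nb_rules).

Lemma rule_in (i : 'I_nb_rules) : List.In (rule i) (rules G).
Proof. exact: In_nth. Qed.

Lemma rule_chain_spec (i : 'I_nb_rules) :
  [/\ correct rkG k (rule i).2, rkG (rule i).1 = trk rkG (rule i).2
    & chain_spec rkG k (rule i).2 (rule_chain i)].
Proof.
have := rule_in i; rewrite /rule_chain; case: (rule i) => A alpha Hin /=.
have [C R _] := kG.2 _ _ Hin; split => //; exact: chain_specP (linG Hin).
Qed.

Lemma steps_ok_rule (i : 'I_nb_rules) : steps_ok k (base_rank i) (rule_steps i).
Proof.
have [_ _] := rule_chain_spec i; rewrite /base_rank /rule_steps.
by case: (rule_chain i) => ss [B|g]; case.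
Qed.

Lemma steps_rank_rule (i : 'I_nb_rules) :
  steps_rank (rule_steps i) (base_rank i) = trk rkG (rule i).2.
Proof.
have [_ _] := rule_chain_spec i; rewrite /base_rank /rule_steps.
by case: (rule_chain i) => ss [B|g]; case.
Qed.

Lemma nsteps_le (i : 'I_nb_rules) t : t <= nsteps i -> t < max_nsteps.+1.
Proof.
move=> Ht; rewrite ltnS (leq_trans Ht) //.
exact: (@leq_bigmax _ (fun i : 'I_nb_rules => nsteps i) i).
Qed.

Lemma ext_rk_mid (i : 'I_nb_rules) t : t <= nsteps i ->
  ext_rk (mid i t) = steps_rank (drop t (rule_steps i)) (base_rank i).
Proof.
move=> Ht; rewrite /mid; case: eqP => [->|_] /=.
  by rewrite drop0 steps_rank_rule; have [] := rule_chain_spec i.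
by rewrite inordK // (nsteps_le Ht).
Qed.

Variant prerule_spec X r : Prop :=
| PreStep (i : 'I_nb_rules) t of t < nsteps i & X = mid i t &
    r = PStep (nth step0 (rule_steps i) t) (mid i t.+1)
| PreBase (i : 'I_nb_rules) of X = mid i (nsteps i) & r = base_prerule i.

Lemma prerulesP X r : List.In (X, r) prerules -> prerule_spec X r.
Proof.
case/List.in_flat_map => i [_]; rewrite /chain_prerules -cats1 => H.
case: (List.in_app_or _ _ _ H) => [/List.in_map_iff [t [[<- <-]]] | [[<- <-]|//]].
  by case/List.in_seq => _ /ltP Ht; apply: (@PreStep _ _ i t) => //; lia.
exact: (@PreBase _ _ i).
Qed.

Lemma prerules_in (i : 'I_nb_rules) X r : List.In (X, r) (chain_prerules i) ->
  List.In (X, r) prerules.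
Proof.
move=> H; apply/List.in_flat_map; exists i; split => //.
by apply: mem_In; rewrite mem_enum.
Qed.

Lemma step_prerule_in (i : 'I_nb_rules) t : t < nsteps i ->
  List.In (mid i t, PStep (nth step0 (rule_steps i) t) (mid i t.+1)) prerules.
Proof.
move=> Ht; apply: (@prerules_in i); rewrite /chain_prerules -cats1.
apply: List.in_or_app; left; apply/List.in_map_iff; exists t; split => //.
by apply/List.in_seq; split; [lia | apply/ltP].
Qed.

Lemma base_prerule_in (i : 'I_nb_rules) :
  List.In (mid i (nsteps i), base_prerule i) prerules.
Proof.
apply: (@prerules_in i); rewrite /chain_prerules -cats1.
by apply: List.in_or_app; right; left.
Qed.

Lemma steps_ok_drop (ss : seq (step Sigma)) t r : steps_ok k r ss -> t < size ss ->
  step_ok k (nth step0 ss t) (steps_rank (drop t.+1 ss) r).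
Proof.
elim: ss t => [|s ss IH] [|t] //= /andP [H1 H2] Ht; first by rewrite drop0.
exact: IH.
Qed.

Lemma prerules_ok X r : List.In (X, r) prerules -> prerule_ok k ext_rk X r.
Proof.
case/prerulesP => [i t Ht -> ->|i -> ->] /=.
- rewrite ext_rk_mid ?(ltnW Ht) // inordK ?(nsteps_le Ht) //.
  rewrite (drop_nth step0 Ht) eqxx andbT.
  exact: steps_ok_drop (steps_ok_rule i) Ht.
- have := ext_rk_mid (leqnn (nsteps i)); rewrite drop_size /= => Em.
  have [_ _] := rule_chain_spec i; rewrite /prerule_ok Em /base_prerule /base_rank.
  by case: (rule_chain i) => ss [B|g] //= [_ _ [-> ->] _ _]; rewrite eqxx.
Qed.

Lemma ext_rk_start : ext_rk (inl (start G)) = 0.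
Proof. exact: kG.1. Qed.

Lemma trank_Llin A x : Llin G A x -> trank x = rkG A.
Proof.
have [_ H] := kG.
elim => [{}A alpha Hin E|{}A alpha B {}x Hin E Ho _ IH]; have [C -> _] := H _ _ Hin.
  exact: trank_nu C E.
by apply: (trank_tval C) => B' HB'; rewrite (occurs_uniq E HB' Ho).
Qed.

Lemma Lpre_mid (i : 'I_nb_rules) t y : t <= nsteps i ->
  Lpre prerules (mid i (nsteps i)) y ->
  Lpre prerules (mid i t) (apply_steps (drop t (rule_steps i)) y).
Proof.
move=> Ht H; move Ed : (nsteps i - t) => d; elim: d t Ht Ed => [|d IH] t Ht Ed.
  have -> : t = nsteps i by lia.
  by rewrite drop_size.
have Htm : t < nsteps i by lia.
rewrite (drop_nth step0 Htm) /=.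
by apply: Lpre_step (step_prerule_in Htm) _; apply: IH; lia.
Qed.

Lemma rule_of A alpha : List.In (A, alpha) (rules G) ->
  exists i : 'I_nb_rules, rule i = (A, alpha).
Proof. by case/(In_nthP (start G, TNt (start G))) => i Hi E; exists (Ordinal Hi). Qed.

Lemma Llin_Lpre A x : Llin G A x -> Lpre prerules (inl A) x.
Proof.
have Hbase i y : Lpre prerules (mid i (nsteps i)) y ->
    Lpre prerules (inl (rule i).1) (apply_steps (rule_steps i) y).
  by move/(Lpre_mid (leq0n _)); rewrite drop0.
elim => [{}A alpha Hin E|{}A alpha B {}x Hin E Ho HB IH];
  have [i Ei] := rule_of Hin; have := Hbase i; have [_ _] := rule_chain_spec i;
  move: (base_prerule_in i); rewrite /base_prerule /rule_steps Ei /=;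
  case: (rule_chain i) => ss [B'|g] /=.
- by move=> _ [HB _ _ _]; have := occurs_nnt HB; rewrite E.
- by move=> Hg [_ -> _ _ _] /(_ g (Lpre_ground Hg)).
- move=> Hu [HB' Ev _ _]; rewrite (occurs_uniq E HB' Ho) in Hu Ev.
  by rewrite Ev ?(trank_Llin HB) //; apply; apply: Lpre_unit Hu IH.
- by move=> _ [E0]; move: E; rewrite E0.
Qed.

(* Invariant: the values of [X_t] are the results of the last [m - t] steps of
   the chain of rule [i] applied to a value of its base. *)
Definition chain_val (i : 'I_nb_rules) (t : nat) (y : tup) : Prop :=
  match (rule_chain i).2 with
  | BaseNt B => exists2 x, Llin G B x & y = apply_steps (drop t (rule_steps i)) x
  | BaseTup g => y = apply_steps (drop t (rule_steps i)) g
  end.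

Definition ext_val (X : ext_nt) (y : tup) : Prop :=
  match X with
  | inl A => Llin G A y
  | inr (i, t) => 0 < t <= nsteps i -> chain_val i t y
  end.

Lemma chain_val0 (i : 'I_nb_rules) y : chain_val i 0 y -> Llin G (rule i).1 y.
Proof.
have [_ _] := rule_chain_spec i; have Hin := rule_in i.
rewrite /chain_val /rule_steps drop0; move: Hin; rewrite /rule_chain.
case: (rule i) => A alpha /= Hin; case: (chain alpha) => ss [B|g] /=.
- case=> HB Ev _ _ [x Hx ->].
  have E1 : nnt alpha = 1 by have := occurs_nnt HB; have := linG Hin; lia.
  by rewrite -Ev ?(trank_Llin Hx) //; exact: Llin_step Hin E1 HB Hx.
- by case=> E0 Ev _ _ _ ->; rewrite -Ev; exact: Llin_ground Hin E0.
Qed.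

Lemma ext_val_mid (i : 'I_nb_rules) t y : t <= nsteps i ->
  chain_val i t y -> ext_val (mid i t) y.
Proof.
move=> Ht H; rewrite /mid; case: eqP => [t0|t0] /=; first by apply: chain_val0; rewrite -t0.
by rewrite inordK ?(nsteps_le Ht).
Qed.

Lemma chain_val_mid (i : 'I_nb_rules) t y : 0 < t <= nsteps i ->
  ext_val (mid i t) y -> chain_val i t y.
Proof.
case/andP => t0 Ht; rewrite /mid (negPf (lt0n_neq0 t0)) /= inordK ?(nsteps_le Ht) //.
by apply; rewrite t0.
Qed.

Lemma chain_val_step (i : 'I_nb_rules) t x : t < nsteps i ->
  chain_val i t.+1 x -> chain_val i t (apply_step (nth step0 (rule_steps i) t) x).
Proof.
move=> Ht; rewrite /chain_val (drop_nth step0 Ht); case: (rule_chain i).2 => [B|g] /=.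
  by case=> x0 Hx0 ->; exists x0.
by move=> ->.
Qed.

Lemma Lpre_ext_val X y : Lpre prerules X y -> ext_val X y.
Proof.
elim => [X0 g|X0 Z x|X0 s Z x] /prerulesP [i|i].
- by move=> t _ _.
- move=> -> E; apply: ext_val_mid => //; move: E; rewrite /base_prerule /chain_val.
  by case: (rule_chain i).2 => // g' [<-]; rewrite drop_size.
- by move=> t _ _.
- move=> -> E _ Hx; apply: ext_val_mid => //; move: E Hx; rewrite /base_prerule /chain_val.
  by case: (rule_chain i).2 => // B [->] /= Hx; rewrite drop_size; exists x.
- move=> t Ht -> [-> ->] _ IH; apply: ext_val_mid (ltnW Ht) _.
  by apply: (chain_val_step Ht); apply: (chain_val_mid _ IH); rewrite Ht.
- by move=> -> E; move: E; rewrite /base_prerule; case: (rule_chain i).2.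
Qed.

Lemma Llin_Lpre_start w : Llin G (start G) w <-> Lpre prerules (inl (start G)) w.
Proof. by split; [apply: Llin_Lpre | move/Lpre_ext_val]. Qed.

End PreNormalForm.

Theorem lemma2 (Sigma : finType) (k : nat) (G : grammar Sigma) :
  is_kdcfg k G -> linear_grammar G ->
  exists G' : grammar Sigma,
    is_kdcfg k G' /\
    (forall A alpha, List.In (A, alpha) (rules G') -> normal_rule G' A alpha) /\
    (forall w : tup Sigma, lang G w <-> lang G' w).
Proof.
move=> kG linG.
have pre_ok := prerules_ok kG linG; have rk0 := ext_rk_start kG.
exists (Gnorm (@ext_rk _ G) (inl (start G)) (prerules G)); split.
  exact: Gnorm_kdcfg pre_ok rk0.
split; first exact: (Gnorm_normal pre_ok).
move=> w; rewrite /lang (langA_Llin linG) (langA_Llin (@Gnorm_linear _ _ _ _ _)) /=.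
by rewrite (Llin_Lpre_start kG linG) (Llin_Gnorm_start pre_ok rk0).
Qed.
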